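(* Assume the standing setting. Let $\epsilon>0$, fix a coarse index $j\in\mathbb Z$ and an integer $m$ with $1\le m\le r$. There exists $\delta>0$ such that if $|u^0_i-u^0_{i+1}|\le\delta$ for all $i\in\mathbb Z$, then $$|v_m-u_m|\le \tfrac32 h+\tfrac34|d_1+d_2|+\epsilon .$$
   Context: Standing setting. Let $F:\mathbb R\to\mathbb R$ be continuously differentiable. For a spatial step $\eta>0$, a time step $\tau>0$ and an initial sequence $(z^0_i)_{i\in\mathbb Z}$ of reals, the EFC (Euler forward in time, centered in space) scheme produces $(z^n_i)_{i\in\mathbb Z,\,n\in\mathbb N}$ by $z^{n+1}_i=z^n_i-F'(z^n_i)\frac{\tau}{2\eta}\,(z^n_{i+1}-z^n_{i-1})$. It satisfies the CFL condition if $|F'(z^n_i)|\,\tau/\eta\le 1$ for all $i\in\mathbb Z$, $n\in\mathbb N$. Fix $a\in\mathbb R$, $h>0$, $\Delta t>0$, an integer $N>1$ and an even integer $r\ge 2$; put $k=h/r$, $dt=\Delta t/r$, $M=Nr$. Let $u_0:\mathbb R\to\mathbb R$. The coarse solution $(w^n_j)$ is the EFC scheme with $\eta=h$, $\tau=\Delta t$, $w^0_j=u_0(a+jh)$; the fine solution $(u^n_i)$ is the EFC scheme with $\eta=k$, $\tau=dt$, $u^0_i=u_0(a+ik)$ (so $w^0_j=u^0_{jr}$). Both are assumed to satisfy the CFL condition. Coarse nodes: $x_j=a+jh$. Interpolant: for a fixed coarse index $j$, set $p_1=x_j$, $p_2=x_{j+1}$, $d_1=w^N_j$, $d_2=w^N_{j+1}$,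 let $q$ be the cubic with $q(0)=p_1$, $q(1)=p_2$, $q'(0)=d_1$, $q'(1)=d_2$, and let $v(t)=q'(t)=(6p_1-6p_2+3d_1+3d_2)t^2+(-6p_1+6p_2-4d_1-2d_2)t+d_1$ for $t\in[0,1]$. For $0\le m\le r$ put $v_m=v(m/r)$ and $u_m=u^M_{jr+m}$ (the fine solution at time step $M$ at the fine node $x_j+mk$). *)

From Stdlib Require Import Reals ZArith Arith.
Open Scope R_scope.

(* EFC scheme: z^{n+1}_i = z^n_i - F'(z^n_i) * tau/(2 eta) * (z^n_{i+1} - z^n_{i-1}).
   dF stands for F' (the theorem ties it to F by derivable_pt_lim). *)
Fixpoint EFC (dF : R -> R) (eta tau : R) (z0 : Z -> R) (n : nat) : Z -> R :=
  match n with
  | O => z0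
  | S n' =>
      let z := EFC dF eta tau z0 n' in
      fun i => z i - dF (z i) * (tau / (2 * eta)) * (z (i + 1)%Z - z (i - 1)%Z)
  end.

Definition CFL (dF : R -> R) (eta tau : R) (z0 : Z -> R) : Prop :=
  forall (n : nat) (i : Z), Rabs (dF (EFC dF eta tau z0 n i)) * tau / eta <= 1.

(* v(t) = q'(t), q the cubic Hermite interpolant with q(0)=p1, q(1)=p2,
   q'(0)=d1, q'(1)=d2. *)
Definition hermite_v (p1 p2 d1 d2 t : R) : R :=
  (6*p1 - 6*p2 + 3*d1 + 3*d2) * t^2 + (-6*p1 + 6*p2 - 4*d1 - 2*d2) * t + d1.

(* Under the CFL condition the coefficient F'(z) tau/(2 eta) of the EFC scheme has modulus
   at most 1/2, so one time step at most triples the neighbour increments of the grid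
   function and moves each value by at most one such increment.  Hence, for small initial
   increments, the coarse slopes d1, d2 and the fine value u_m all stay within eps/3 of
   u0(x_j).  Writing t = m/r, the Hermite derivative splits as
   v(t) = 6t(1-t)(h - (d1+d2)/2) + (d1+d2)/2 + (d1-d2)(1/2-t), and 6t(1-t) <= 3/2. *)
From Stdlib Require Import Reals ZArith Arith Lra Lia Psatz.
Open Scope R_scope.

Lemma Rabs_mult_le c x a b : Rabs c <= a -> Rabs x <= b -> Rabs (c * x) <= a * b.
Proof.
  intros Hc Hx; rewrite Rabs_mult.
  apply Rmult_le_compat; auto using Rabs_pos.
Qed.

Lemma increments_sum_le (z : Z -> R) D :
  (forall i, Rabs (z (i + 1)%Z - z i) <= D) ->
  forall (l : nat) i, Rabs (z (i + Z.of_nat l)%Z - z i) <= INR l * D.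
Proof.
  intros Hinc l; induction l as [|l IH]; intro i.
  - rewrite Z.add_0_r, Rminus_diag, Rabs_R0; simpl; lra.
  - rewrite Nat2Z.inj_succ, S_INR, <- Z.add_1_r, Z.add_assoc.
    replace (z (i + Z.of_nat l + 1)%Z - z i) with
      ((z (i + Z.of_nat l + 1)%Z - z (i + Z.of_nat l)%Z) + (z (i + Z.of_nat l)%Z - z i))
      by ring.
    eapply Rle_trans; [apply Rabs_triang|].
    specialize (IH i); specialize (Hinc (i + Z.of_nat l)%Z); lra.
Qed.

Section EFC_stability.

Variables (dF : R -> R) (eta tau D : R) (z0 : Z -> R).
Hypotheses (Heta : 0 < eta) (Htau : 0 < tau) (HCFL : CFL dF eta tau z0).
Hypothesis Hinc : forall i, Rabs (z0 (i + 1)%Z - z0 i) <= D.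

Lemma CFL_coef_le n i :
  Rabs (dF (EFC dF eta tau z0 n i) * (tau / (2 * eta))) <= 1/2.
Proof.
  specialize (HCFL n i).
  rewrite Rabs_mult, (Rabs_pos_eq (tau / (2 * eta))) by (apply Rlt_le, Rdiv_lt_0_compat; lra).
  replace (Rabs (dF (EFC dF eta tau z0 n i)) * (tau / (2 * eta)))
    with (Rabs (dF (EFC dF eta tau z0 n i)) * tau / eta / 2) by (field; lra).
  lra.
Qed.

Lemma EFC_step_le n i :
  Rabs (EFC dF eta tau z0 (S n) i - EFC dF eta tau z0 n i)
  <= 1/2 * Rabs (EFC dF eta tau z0 n (i + 1)%Z - EFC dF eta tau z0 n (i - 1)%Z).
Proof.
  simpl EFC; set (z := EFC dF eta tau z0 n).
  replace (z i - dF (z i) * (tau / (2 * eta)) * (z (i + 1)%Z - z (i - 1)%Z) - z i)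
    with (- (dF (z i) * (tau / (2 * eta)) * (z (i + 1)%Z - z (i - 1)%Z))) by ring.
  rewrite Rabs_Ropp; apply Rabs_mult_le; [apply CFL_coef_le | lra].
Qed.

Lemma EFC_wide_increment_le n i :
  (forall i, Rabs (EFC dF eta tau z0 n (i + 1)%Z - EFC dF eta tau z0 n i) <= 3 ^ n * D) ->
  Rabs (EFC dF eta tau z0 n (i + 1)%Z - EFC dF eta tau z0 n (i - 1)%Z) <= 2 * (3 ^ n * D).
Proof.
  intro Hn; set (z := EFC dF eta tau z0 n) in *.
  assert (Hl := Hn (i - 1)%Z); rewrite Z.sub_add in Hl.
  replace (z (i + 1)%Z - z (i - 1)%Z) with ((z (i + 1)%Z - z i) + (z i - z (i - 1)%Z)) by ring.
  eapply Rle_trans; [apply Rabs_triang|]; specialize (Hn i); lra.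
Qed.

Lemma EFC_increment_le n i :
  Rabs (EFC dF eta tau z0 n (i + 1)%Z - EFC dF eta tau z0 n i) <= 3 ^ n * D.
Proof.
  revert i; induction n as [|n IH]; intro i; [rewrite pow_O, Rmult_1_l; apply Hinc|].
  assert (Hr := EFC_step_le n (i + 1)); assert (Hl := EFC_step_le n i).
  assert (Wr := EFC_wide_increment_le n (i + 1) IH).
  assert (Wl := EFC_wide_increment_le n i IH).
  rewrite Z.add_simpl_r in Hr, Wr.
  set (z := EFC dF eta tau z0) in *.
  replace (z (S n) (i + 1)%Z - z (S n) i) with
    ((z (S n) (i + 1)%Z - z n (i + 1)%Z) + (z n (i + 1)%Z - z n i) + - (z (S n) i - z n i))
    by ring.
  assert (T1 := Rabs_triang (z (S n) (i + 1)%Z - z n (i + 1)%Z) (z n (i + 1)%Z - z n i)).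
  assert (T2 := Rabs_triang (z (S n) (i + 1)%Z - z n (i + 1)%Z + (z n (i + 1)%Z - z n i))
                  (- (z (S n) i - z n i))).
  rewrite Rabs_Ropp in T2.
  specialize (IH i); simpl pow; lra.
Qed.

Lemma EFC_drift_le n i :
  Rabs (EFC dF eta tau z0 n i - z0 i) <= (3 ^ n - 1) / 2 * D.
Proof.
  induction n as [|n IH]; [rewrite Rminus_diag, Rabs_R0; simpl; lra|].
  assert (Hs := EFC_step_le n i).
  assert (W := EFC_wide_increment_le n i (EFC_increment_le n)).
  replace (EFC dF eta tau z0 (S n) i - z0 i) with
    ((EFC dF eta tau z0 (S n) i - EFC dF eta tau z0 n i) + (EFC dF eta tau z0 n i - z0 i))
    by ring.
  eapply Rle_trans; [apply Rabs_triang|]; simpl pow; lra.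
Qed.

Lemma EFC_shift_drift_le n (l : nat) i :
  Rabs (EFC dF eta tau z0 n (i + Z.of_nat l)%Z - z0 i) <= ((3 ^ n - 1) / 2 + INR l) * D.
Proof.
  replace (EFC dF eta tau z0 n (i + Z.of_nat l)%Z - z0 i) with
    ((EFC dF eta tau z0 n (i + Z.of_nat l)%Z - z0 (i + Z.of_nat l)%Z)
     + (z0 (i + Z.of_nat l)%Z - z0 i)) by ring.
  eapply Rle_trans; [apply Rabs_triang|].
  assert (Hd := EFC_drift_le n (i + Z.of_nat l)); assert (Hs := increments_sum_le z0 D Hinc l i).
  lra.
Qed.

End EFC_stability.

Lemma fine_node_multiple a h (r : nat) jj :
  (0 < r)%nat -> a + IZR (jj * Z.of_nat r) * (h / INR r) = a + IZR jj * h.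
Proof.
  intro Hr; rewrite mult_IZR, <- INR_IZR_INZ; field.
  apply not_0_INR; lia.
Qed.

Lemma coarse_increment_le (u0 : R -> R) a h (r : nat) delta :
  (0 < r)%nat ->
  (forall i, Rabs (u0 (a + IZR (i + 1) * (h / INR r)) - u0 (a + IZR i * (h / INR r))) <= delta) ->
  forall j, Rabs (u0 (a + IZR (j + 1) * h) - u0 (a + IZR j * h)) <= INR r * delta.
Proof.
  intros Hr Hinc j.
  rewrite <- !(fine_node_multiple a h r) by exact Hr.
  rewrite Z.mul_add_distr_r, Z.mul_1_l.
  exact (increments_sum_le (fun i => u0 (a + IZR i * (h / INR r))) delta Hinc r _).
Qed.

Lemma INR_ratio_unit (m r : nat) : (0 < r)%nat -> (m <= r)%nat -> 0 <= INR m / INR r <= 1.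
Proof.
  intros Hr Hm; assert (0 < INR r) by (apply lt_0_INR; lia).
  split; [apply Rmult_le_pos; [apply pos_INR | apply Rlt_le, Rinv_0_lt_compat; lra]|].
  apply (Rmult_le_reg_r (INR r)); [lra|].
  unfold Rdiv; rewrite Rmult_assoc, Rinv_l, Rmult_1_r, Rmult_1_l by lra; apply le_INR, Hm.
Qed.

Lemma hermite_v_split p1 h d1 d2 t :
  hermite_v p1 (p1 + h) d1 d2 t
  = 6 * t * (1 - t) * (h - (d1 + d2) / 2) + ((d1 + d2) / 2 + (d1 - d2) * (1/2 - t)).
Proof. unfold hermite_v; field. Qed.

Lemma hermite_v_sub_le p1 h d1 d2 t c u E :
  0 <= h -> 0 <= t <= 1 ->
  Rabs (d1 - c) <= E -> Rabs (d2 - c) <= E -> Rabs (u - c) <= E ->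
  Rabs (hermite_v p1 (p1 + h) d1 d2 t - u) <= 3/2 * h + 3/4 * Rabs (d1 + d2) + 3 * E.
Proof.
  intros Hh Ht H1 H2 Hu.
  rewrite hermite_v_split.
  replace (6 * t * (1 - t) * (h - (d1 + d2) / 2) + ((d1 + d2) / 2 + (d1 - d2) * (1/2 - t)) - u)
    with (6 * t * (1 - t) * (h - (d1 + d2) / 2) + (((d1 + d2) / 2 - u) + (d1 - d2) * (1/2 - t)))
    by ring.
  assert (Hq : 0 <= 6 * t * (1 - t) <= 3/2)
    by (destruct Ht; split; [|assert (0 <= (t - 1/2) * (t - 1/2)) by apply Rle_0_sqr]; nra).
  assert (Hb : Rabs (h - (d1 + d2) / 2) <= h + Rabs (d1 + d2) / 2) by (split_Rabs; lra).
  assert (Bump : Rabs (6 * t * (1 - t) * (h - (d1 + d2) / 2)) <= 3/2 * h + 3/4 * Rabs (d1 + d2)).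
  { rewrite Rabs_mult, (Rabs_pos_eq _ (proj1 Hq)).
    assert (0 <= Rabs (h - (d1 + d2) / 2)) by apply Rabs_pos; nra. }
  assert (Mean : Rabs ((d1 + d2) / 2 - u) <= 2 * E) by (revert H1 H2 Hu; split_Rabs; lra).
  assert (Tilt : Rabs ((d1 - d2) * (1/2 - t)) <= 2 * E * (1/2))
    by (apply Rabs_mult_le; revert H1 H2; split_Rabs; lra).
  assert (T := Rabs_triang ((d1 + d2) / 2 - u) ((d1 - d2) * (1/2 - t))).
  eapply Rle_trans; [apply Rabs_triang|]; lra.
Qed.

Theorem corollary3
  (F dF : R -> R)
  (HF : forall x, derivable_pt_lim F x (dF x))
  (HdF : continuity dF)
  (a h Dt : R) (N r : nat)
  (Hh : 0 < h) (HDt : 0 < Dt) (HN : (1 < N)%nat) (Hr : (2 <= r)%nat)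
  (Hreven : Nat.Even r)
  (eps : R) (Heps : 0 < eps) (j : Z) (m : nat) (Hm : (1 <= m <= r)%nat) :
  exists delta : R, 0 < delta /\
    forall u0 : R -> R,
      let k := h / INR r in
      let dt := Dt / INR r in
      let M := (N * r)%nat in
      let w0 := fun jj : Z => u0 (a + IZR jj * h) in
      let ui0 := fun i : Z => u0 (a + IZR i * k) in
      CFL dF h Dt w0 ->
      CFL dF k dt ui0 ->
      (forall i : Z, Rabs (ui0 i - ui0 (i + 1)%Z) <= delta) ->
      let p1 := a + IZR j * h in
      let p2 := a + IZR (j + 1) * h in
      let d1 := EFC dF h Dt w0 N j in
      let d2 := EFC dF h Dt w0 N (j + 1)%Z in
      let v_m := hermite_v p1 p2 d1 d2 (INR m / INR r) in
      let u_m := EFC dF k dt ui0 M (j * Z.of_nat r + Z.of_nat m)%Z in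
      Rabs (v_m - u_m) <= 3/2 * h + 3/4 * Rabs (d1 + d2) + eps.
Proof.
  assert (Hr0 : 0 < INR r) by (apply lt_0_INR; lia).
  assert (HmR : INR m <= INR r) by (apply le_INR; lia).
  assert (P3N : 1 <= 3 ^ N) by (apply pow_R1_Rle; lra).
  assert (P3M : 1 <= 3 ^ (N * r)) by (apply pow_R1_Rle; lra).
  (* K dominates the drift factors (3^N - 1)/2 r and (3^N + 1)/2 r of d1, d2 on the
     coarse grid and (3^(Nr) - 1)/2 + m of u_m on the fine grid. *)
  set (K := 3 ^ N * INR r + 3 ^ (N * r) + INR r).
  assert (HK : 0 < K) by (unfold K; nra).
  assert (Hd0 : 0 < eps / (3 * K)) by (apply Rdiv_lt_0_compat; lra).
  exists (eps / (3 * K)); split; [exact Hd0|].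
  intros u0 k dt M w0 ui0 HCw HCu Hinc p1 p2 d1 d2 v_m u_m.
  assert (Hdelta : K * (eps / (3 * K)) = eps / 3) by (field; lra).
  set (delta := eps / (3 * K)) in *.
  assert (Hincu : forall i, Rabs (ui0 (i + 1)%Z - ui0 i) <= delta)
    by (intro i; rewrite Rabs_minus_sym; apply Hinc).
  assert (Hincw := coarse_increment_le u0 a h r delta ltac:(lia) Hincu).
  assert (E1 := EFC_shift_drift_le dF h Dt _ w0 Hh HDt HCw Hincw N 0 j).
  assert (E2 := EFC_shift_drift_le dF h Dt _ w0 Hh HDt HCw Hincw N 1 j).
  assert (Eu := EFC_shift_drift_le dF k dt delta ui0 ltac:(apply Rdiv_lt_0_compat; lra)
                  ltac:(apply Rdiv_lt_0_compat; lra) HCu Hincu M m (j * Z.of_nat r)).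
  rewrite Z.add_0_r in E1; fold d1 in E1; fold d2 in E2; fold u_m in Eu.
  unfold ui0, k in Eu; rewrite fine_node_multiple in Eu by lia; fold (w0 j) in Eu.
  unfold v_m, p2; rewrite plus_IZR, Rmult_plus_distr_r, Rmult_1_l, <- Rplus_assoc.
  replace eps with (3 * (K * delta)) by lra.
  apply hermite_v_sub_le with (c := w0 j); [lra | apply INR_ratio_unit; lia | ..].
  - eapply Rle_trans; [exact E1|]; unfold K; simpl INR.
    assert (0 < INR r * delta) by nra; nra.
  - eapply Rle_trans; [exact E2|]; unfold K; simpl INR.
    assert (0 < INR r * delta) by nra; nra.
  - eapply Rle_trans; [exact Eu|]; unfold K, M.
    assert (INR m * delta <= INR r * delta) by nra.
    assert (0 <= 3 ^ N * INR r * delta) by (apply Rmult_le_pos; nra).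
    assert (0 <= 3 ^ (N * r) * delta) by nra; lra.
Qed.
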